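(* For every integer $n\ge 1$, $$\Delta_n=2^{-n}\,\frac{1}{2\pi i}\oint_C \mathbf{1}^{T}\,\frac{A(z)^{n-1}-A(1/z)^{n-1}}{1-z}\,\mathbf{1}\,dz,$$ where $A(z)=\begin{pmatrix}1 & 1/z\\ 1 & z\end{pmatrix}$, $\mathbf 1=(1,1)^T$, and $C$ is any positively oriented simple closed contour in $\mathbb C$ enclosing the origin (and not passing through $0$).
   Context: A fair coin is flipped $n$ times, producing a sequence $x_1,\dots,x_n\in\{H,T\}$ of independent uniformly random outcomes. Alice's score is the number of indices $i\in\{1,\dots,n-1\}$ with $(x_i,x_{i+1})=(H,H)$; Bob's score is the number of indices $i\in\{1,\dots,n-1\}$ with $(x_i,x_{i+1})=(H,T)$. Let $P_n(\mathrm{Bob})$ be the probability that Bob's score is strictly larger than Alice's, $P_n(\mathrm{Alice})$ the probability that Alice's score is strictly larger than Bob's, and $\Delta_n=P_n(\mathrm{Bob})-P_n(\mathrm{Alice})$. *)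

From Stdlib Require Import Reals List Arith.
From Coquelicot Require Import Coquelicot.
Import ListNotations.
Open Scope R_scope.

(* A coin sequence is a list of booleans: true = H, false = T. *)

Fixpoint count_pair (p q : bool) (l : list bool) : nat :=
  match l with
  | a :: ((b :: _) as t) =>
      (if andb (Bool.eqb a p) (Bool.eqb b q) then 1 else 0) + count_pair p q t
  | _ => 0
  end.

Definition alice_score (l : list bool) : nat := count_pair true true l.
Definition bob_score (l : list bool) : nat := count_pair true false l.

Fixpoint all_seqs (n : nat) : list (list bool) :=
  match n with
  | O => [[]]
  | S m => map (cons true) (all_seqs m) ++ map (cons false) (all_seqs m)
  end.

Definition prob_event (n : nat) (E : list bool -> bool) : R :=
  INR (length (filter E (all_seqs n))) / 2 ^ n.

Definition P_Bob (n : nat) : R :=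
  prob_event n (fun l => Nat.ltb (alice_score l) (bob_score l)).
Definition P_Alice (n : nat) : R :=
  prob_event n (fun l => Nat.ltb (bob_score l) (alice_score l)).
Definition Delta_n (n : nat) : R := P_Bob n - P_Alice n.

Record M2 := mkM2 { m11 : C; m12 : C; m21 : C; m22 : C }.

Definition M2mul (A B : M2) : M2 :=
  mkM2 (m11 A * m11 B + m12 A * m21 B)%C (m11 A * m12 B + m12 A * m22 B)%C
       (m21 A * m11 B + m22 A * m21 B)%C (m21 A * m12 B + m22 A * m22 B)%C.

Definition M2id : M2 := mkM2 1%C 0%C 0%C 1%C.

Fixpoint M2pow (A : M2) (k : nat) : M2 :=
  match k with O => M2id | S j => M2mul A (M2pow A j) end.

Definition ones_form (A : M2) : C := (m11 A + m12 A + m21 A + m22 A)%C.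

Definition Amat (z : C) : M2 := mkM2 1%C (/ z)%C 1%C z.

Definition integrand (n : nat) (z : C) : C :=
  ((ones_form (M2pow (Amat z) (n - 1)) - ones_form (M2pow (Amat (/ z)%C) (n - 1)))
     / (1 - z))%C.

Definition C1_on (g : R -> C) (a b : R) : Prop :=
  exists h h' : R -> C,
    (forall t, a <= t <= b -> h t = g t) /\
    (forall t, a <= t <= b ->
       @is_derive R_AbsRing C_R_NormedModule h t (h' t) /\ continuous h' t).

Definition piecewise_C1 (g : R -> C) : Prop :=
  exists (k : nat) (tt : nat -> R),
    (1 <= k)%nat /\ tt O = 0 /\ tt k = 1 /\
    (forall i, (i < k)%nat -> tt i < tt (S i) /\ C1_on g (tt i) (tt (S i))).

(* velocity of the parametrization (defined away from the finitely many breakpoints) *)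
Definition velocity (g : R -> C) (t : R) : C :=
  (Derive (fun s => fst (g s)) t, Derive (fun s => snd (g s)) t).

Definition contour_integral (g : R -> C) (f : C -> C) : C :=
  @RInt C_R_CompleteNormedModule (fun t => (f (g t) * velocity g t)%C) 0 1.

(* g is a positively oriented simple closed contour enclosing 0, not passing
   through 0.  "Encloses 0 and is positively oriented" is expressed by the
   winding number about 0 being 1. *)
Definition pos_simple_closed_contour_around_0 (g : R -> C) : Prop :=
  piecewise_C1 g /\
  g 0 = g 1 /\
  (forall s t, 0 <= s -> s < t -> t < 1 -> g s <> g t) /\
  (forall t, 0 <= t <= 1 -> g t <> 0%C) /\
  contour_integral g (fun z => / z)%C = (2 * PI * Ci)%C.

From Stdlib Require Import Reals Lra Lia ZArith List Classical.
From Coquelicot Require Import Coquelicot.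
Open Scope R_scope.

(* Let D(l) be Alice's score minus Bob's. The matrix A(z) is a transfer matrix: the column sums
   of A(z)^m are the generating functions of z^D(l) over the sequences of length m+1 starting
   with T and with H, so 1^T A(z)^(n-1) 1 is the sum of z^D(l) over all l of length n, and
   1^T A(1/z)^(n-1) 1 that of z^(-D(l)). For every d, (z^d - z^(-d)) / (1 - z) is a Laurent
   polynomial with coefficient -sgn d at z^(-1), so off the point z = 1 (met at most once by a
   simple contour, hence invisible to the integral) the integrand is a sum of such polynomials.
   As z^k has the primitive z^(k+1)/(k+1) for k <> -1 while the contour winds once around 0,
   the integral of z^k is 2 pi i [k = -1]; the integral is therefore
   2 pi i (#{D < 0} - #{D > 0}) = 2 pi i 2^n Delta_n. *)

Definition Cpowz (z : C) (k : Z) : C :=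
  if Z.leb 0 k then Cpow z (Z.to_nat k) else (/ Cpow z (Z.to_nat (- k)))%C.

Lemma Cpowz_nat z m : Cpowz z (Z.of_nat m) = Cpow z m.
Proof.
  unfold Cpowz. rewrite Nat2Z.id.
  destruct (Z.leb_spec 0 (Z.of_nat m)); [reflexivity | lia].
Qed.

Lemma Cpowz_neg z m : Cpowz z (- Z.of_nat (S m)) = (/ Cpow z (S m))%C.
Proof.
  unfold Cpowz. destruct (Z.leb_spec 0 (- Z.of_nat (S m))); [lia |].
  rewrite Z.opp_involutive, Nat2Z.id. reflexivity.
Qed.

Lemma Z_nat_or_neg k : exists m, k = Z.of_nat m \/ k = (- Z.of_nat (S m))%Z.
Proof.
  destruct (Z.leb_spec 0 k).
  - exists (Z.to_nat k). left. lia.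
  - exists (Z.to_nat (- k - 1)). right. lia.
Qed.

Lemma Cpowz_add1 (z : C) k : z <> 0%C -> Cpowz z (k + 1) = (z * Cpowz z k)%C.
Proof.
  intros Hz. destruct (Z_nat_or_neg k) as [m [-> | ->]].
  - replace (Z.of_nat m + 1)%Z with (Z.of_nat (S m)) by lia.
    rewrite !Cpowz_nat. reflexivity.
  - destruct m as [|m].
    + replace (- Z.of_nat 1 + 1)%Z with (Z.of_nat 0) by lia.
      rewrite Cpowz_nat, Cpowz_neg. simpl. field. exact Hz.
    + replace (- Z.of_nat (S (S m)) + 1)%Z with (- Z.of_nat (S m))%Z by lia.
      rewrite !Cpowz_neg. assert (Cpow z m <> 0%C) by (apply Cpow_nz; exact Hz).
      simpl. field. auto.
Qed.

Lemma Cpowz_m1 (z : C) : Cpowz z (-1) = (/ z)%C.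
Proof. unfold Cpowz. simpl. rewrite Cmult_1_r. reflexivity. Qed.

Lemma Cpowz_inv (z : C) d : z <> 0%C -> Cpowz (/ z) d = Cpowz z (- d).
Proof.
  intros Hz. destruct (Z_nat_or_neg d) as [m [-> | ->]].
  - destruct m as [|m]; [reflexivity |].
    rewrite Cpowz_nat, Cpowz_neg, Cpow_inv; auto.
  - rewrite Z.opp_involutive, Cpowz_nat, Cpowz_neg, Cpow_inv by exact Hz.
    field. apply Cpow_nz. exact Hz.
Qed.

Lemma is_derive_C_fst (f : R -> C) t (l : C) :
  is_derive f t l -> is_derive (fun s => fst (f s)) t (fst l).
Proof.
  intros H. apply (filterdiff_ext_lin _ (fun y : R => fst (scal y l))).
  - apply (filterdiff_comp' f fst t _ fst H), filterdiff_linear, is_linear_fst.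
  - reflexivity.
Qed.

Lemma is_derive_C_snd (f : R -> C) t (l : C) :
  is_derive f t l -> is_derive (fun s => snd (f s)) t (snd l).
Proof.
  intros H. apply (filterdiff_ext_lin _ (fun y : R => snd (scal y l))).
  - apply (filterdiff_comp' f snd t _ snd H), filterdiff_linear, is_linear_snd.
  - reflexivity.
Qed.

Lemma is_derive_C_pair (f : R -> C) t (l : C) :
  is_derive (fun s => fst (f s)) t (fst l) -> is_derive (fun s => snd (f s)) t (snd l) ->
  is_derive f t l.
Proof.
  destruct l as [a b]. intros Ha Hb.
  apply (filterdiff_ext (fun s => (fst (f s), snd (f s)))).
  { intros s. destruct (f s). reflexivity. }
  apply (filterdiff_ext_lin _ (fun y : R => (scal y a, scal y b))).
  - apply (filterdiff_comp_2 _ _ (fun x y => (x, y)) _ _ (fun x y => (x, y)) Ha Hb).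
    apply filterdiff_linear, is_linear_prod; [apply is_linear_fst | apply is_linear_snd].
  - reflexivity.
Qed.

Lemma is_derive_eq {K : AbsRing} {V : NormedModule K} (f : K -> V) t l l' :
  l = l' -> is_derive f t l -> is_derive f t l'.
Proof. intros ->. auto. Qed.

(* Coquelicot infers the product-module structure on [C = R * R]; stating such equalities at
   type [C] lets [ring] and [field] solve them. *)
Lemma is_derive_C_eq (f : R -> C) t (l l' : C) : l = l' -> is_derive f t l -> is_derive f t l'.
Proof. intros ->. auto. Qed.

Lemma is_derive_C_mult (f g : R -> C) t (f' g' : C) :
  is_derive f t f' -> is_derive g t g' ->
  is_derive (fun s => (f s * g s)%C) t (f' * g t + f t * g')%C.
Proof.
  intros Hf Hg.
  apply is_derive_C_fst in Hf as Hf1. apply is_derive_C_snd in Hf as Hf2.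
  apply is_derive_C_fst in Hg as Hg1. apply is_derive_C_snd in Hg as Hg2.
  apply is_derive_C_pair.
  - eapply is_derive_eq;
      [| apply (is_derive_minus (fun s => fst (f s) * fst (g s)) (fun s => snd (f s) * snd (g s)));
         apply Derive.is_derive_mult; eassumption].
    unfold minus, plus, opp. simpl. ring.
  - eapply is_derive_eq;
      [| apply (is_derive_plus (fun s => fst (f s) * snd (g s)) (fun s => snd (f s) * fst (g s)));
         apply Derive.is_derive_mult; eassumption].
    unfold plus. simpl. ring.
Qed.

Lemma is_derive_C_inv (f : R -> C) t (f' : C) :
  is_derive f t f' -> f t <> 0%C ->
  is_derive (fun s => (/ f s)%C) t (- f' / (f t * f t))%C.
Proof.
  intros Hf Hnz.
  apply is_derive_C_fst in Hf as Hu. apply is_derive_C_snd in Hf as Hw.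
  assert (HN : fst (f t) ^ 2 + snd (f t) ^ 2 <> 0).
  { intros H0. apply Hnz. destruct (f t) as [u w]. simpl in H0.
    assert (u = 0) by nra. assert (w = 0) by nra. subst. reflexivity. }
  assert (HinvN : is_derive (fun s => / (fst (f s) ^ 2 + snd (f s) ^ 2)) t
      (- (2 * fst f' * fst (f t) + 2 * snd f' * snd (f t)) / (fst (f t) ^ 2 + snd (f t) ^ 2) ^ 2)).
  { eapply is_derive_eq; [| apply is_derive_inv; [| exact HN]].
    2: { apply (is_derive_plus (fun s => fst (f s) ^ 2) (fun s => snd (f s) ^ 2));
         apply is_derive_pow; eassumption. }
    unfold plus. simpl. field. simpl in HN. rewrite !Rmult_1_r in HN. exact HN. }
  apply is_derive_C_pair.
  - eapply is_derive_eq; [| exact (Derive.is_derive_mult _ _ _ _ _ Hu HinvN)].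
    destruct f' as [a b], (f t) as [u w]. simpl in *. field.
    split; intros E; apply HN; nra.
  - eapply is_derive_eq;
      [| exact (Derive.is_derive_mult _ _ _ _ _ (is_derive_opp (fun s => snd (f s)) _ _ Hw) HinvN)].
    destruct f' as [a b], (f t) as [u w]. unfold opp. simpl in *. field.
    split; intros E; apply HN; nra.
Qed.

Lemma is_derive_C_pow (f : R -> C) t (f' : C) m :
  is_derive f t f' ->
  is_derive (fun s => Cpow (f s) (S m)) t (INR (S m) * Cpow (f t) m * f')%C.
Proof.
  intros Hf. induction m as [|m IH].
  - apply (is_derive_ext f). { intros s. simpl. symmetry. apply Cmult_1_r. }
    eapply is_derive_C_eq; [| exact Hf]. simpl. ring.
  - eapply is_derive_C_eq; [| exact (is_derive_C_mult _ _ _ _ _ Hf IH)].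
    rewrite (S_INR (S m)), RtoC_plus. simpl. ring.
Qed.

Lemma is_derive_C_Cpowz (f : R -> C) t (f' : C) j :
  is_derive f t f' -> f t <> 0%C ->
  is_derive (fun s => Cpowz (f s) j) t (IZR j * Cpowz (f t) (j - 1) * f')%C.
Proof.
  intros Hf Hnz. destruct (Z_nat_or_neg j) as [m [-> | ->]].
  - destruct m as [|m].
    + apply (is_derive_ext (V := C_R_NormedModule) (fun _ => RtoC 1)).
      { intros s. rewrite Cpowz_nat. reflexivity. }
      replace (IZR (Z.of_nat 0) * _ * f')%C with (RtoC 0) by (simpl; ring).
      exact (is_derive_const (V := C_R_NormedModule) (RtoC 1) t).
    + apply (is_derive_ext (fun s => Cpow (f s) (S m))).
      { intros s. rewrite Cpowz_nat. reflexivity. }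
      eapply is_derive_C_eq; [| exact (is_derive_C_pow _ _ _ m Hf)].
      replace (Z.of_nat (S m) - 1)%Z with (Z.of_nat m) by lia.
      rewrite Cpowz_nat, <- INR_IZR_INZ. reflexivity.
  - apply (is_derive_ext (fun s => / Cpow (f s) (S m))%C).
    { intros s. rewrite Cpowz_neg. reflexivity. }
    eapply is_derive_C_eq;
      [| exact (is_derive_C_inv _ _ _ (is_derive_C_pow _ _ _ m Hf) (Cpow_nz _ _ Hnz))].
    replace (- Z.of_nat (S m) - 1)%Z with (- Z.of_nat (S (S m)))%Z by lia.
    rewrite Cpowz_neg, opp_IZR, <- INR_IZR_INZ, RtoC_opp.
    assert (Cpow (f t) m <> 0%C) by (apply Cpow_nz; exact Hnz).
    simpl. field. auto.
Qed.

Lemma continuous_C_mult (f g : R -> C) t :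
  continuous f t -> continuous g t -> continuous (fun s => (f s * g s)%C) t.
Proof.
  intros Hf Hg P HP. apply locally_C in HP.
  apply (@continuous_mult R_UniformSpace C_AbsRing f g t); [| | exact HP];
    intros Q HQ; apply (Hf, Hg); apply locally_C; exact HQ.
Qed.

Lemma is_RInt_C_ext (f f' : R -> C) a b (v v' : C) :
  is_RInt f a b v -> v = v' -> (forall t, f t = f' t) -> is_RInt f' a b v'.
Proof. intros H <- Hf. apply (is_RInt_ext f); auto. Qed.

Lemma velocity_C1_piece (g h h' : R -> C) a b t :
  (forall s, a <= s <= b -> h s = g s) -> is_derive h t (h' t) -> a < t < b ->
  velocity g t = h' t.
Proof.
  intros Hhg Hd Ht.
  assert (Hloc : locally t (fun s => h s = g s)).
  { apply (locally_interval _ t a b); simpl; try lra. intros y Hy1 Hy2. apply Hhg. lra. }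
  unfold velocity.
  rewrite <- (Derive_ext_loc (fun s => fst (h s)) (fun s => fst (g s))),
          <- (Derive_ext_loc (fun s => snd (h s)) (fun s => snd (g s))).
  2, 3: revert Hloc; apply filter_imp; intros s ->; reflexivity.
  assert (Hd1 : Derive (fun s => fst (h s)) t = fst (h' t))
    by exact (is_derive_unique _ _ _ (is_derive_C_fst _ _ _ Hd)).
  assert (Hd2 : Derive (fun s => snd (h s)) t = snd (h' t))
    by exact (is_derive_unique _ _ _ (is_derive_C_snd _ _ _ Hd)).
  transitivity (fst (h' t), snd (h' t)); [f_equal; assumption |].
  destruct (h' t). reflexivity.
Qed.

Section C1Piece.

Variables (g : R -> C) (a b : R).
Hypotheses (Hab : a < b) (Hg : C1_on g a b) (Hg0 : forall t, a <= t <= b -> g t <> 0%C).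

Lemma is_RInt_Cpowz_C1_piece j :
  is_RInt (fun t => IZR j * Cpowz (g t) (j - 1) * velocity g t)%C a b
    (Cpowz (g b) j - Cpowz (g a) j)%C.
Proof.
  destruct Hg as [h [h' [Hhg Hd]]].
  assert (Hh0 : forall t, a <= t <= b -> h t <> 0%C) by (intros t Ht; rewrite Hhg; auto).
  rewrite <- !Hhg by lra.
  apply (is_RInt_ext (fun t => IZR j * Cpowz (h t) (j - 1) * h' t)%C).
  { rewrite Rmin_left, Rmax_right by lra. intros t Ht.
    rewrite Hhg, (velocity_C1_piece g h h' a b t Hhg (proj1 (Hd t ltac:(lra)))) by lra.
    reflexivity. }
  apply (@is_RInt_derive C_R_CompleteNormedModule (fun t => Cpowz (h t) j));
    rewrite Rmin_left, Rmax_right by lra; intros t Ht; destruct (Hd t Ht) as [Hdt Hct].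
  - apply is_derive_C_Cpowz; auto.
  - apply continuous_C_mult; [apply continuous_C_mult |]; auto.
    + apply continuous_const.
    + apply (@ex_derive_continuous R_AbsRing C_R_NormedModule).
      eexists. exact (is_derive_C_Cpowz _ _ _ _ Hdt (Hh0 t Ht)).
Qed.

Lemma ex_RInt_Cpowz_C1_piece k :
  ex_RInt (fun t => Cpowz (g t) k * velocity g t)%C a b.
Proof.
  destruct Hg as [h [h' [Hhg Hd]]].
  assert (Hh0 : forall t, a <= t <= b -> h t <> 0%C) by (intros t Ht; rewrite Hhg; auto).
  apply (ex_RInt_ext (fun t => Cpowz (h t) k * h' t)%C).
  { rewrite Rmin_left, Rmax_right by lra. intros t Ht.
    rewrite Hhg, (velocity_C1_piece g h h' a b t Hhg (proj1 (Hd t ltac:(lra)))) by lra.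
    reflexivity. }
  apply (@ex_RInt_continuous C_R_CompleteNormedModule). rewrite Rmin_left, Rmax_right by lra.
  intros t Ht. destruct (Hd t Ht) as [Hdt Hct]. apply continuous_C_mult; auto.
  apply (@ex_derive_continuous R_AbsRing C_R_NormedModule).
  eexists. exact (is_derive_C_Cpowz _ _ _ _ Hdt (Hh0 t Ht)).
Qed.

End C1Piece.

Section Partition.

Variables (g : R -> C) (K : nat) (tt : nat -> R).
Hypotheses (tt0 : tt O = 0) (ttK : tt K = 1)
  (pieces : forall i, (i < K)%nat -> tt i < tt (S i) /\ C1_on g (tt i) (tt (S i)))
  (g_nz : forall t, 0 <= t <= 1 -> g t <> 0%C).

Lemma partition_le i j : (i <= j <= K)%nat -> tt i <= tt j.
Proof.
  intros [Hij HjK]. induction Hij as [|j Hij IH]; [lra |].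
  specialize (pieces j ltac:(lia)). specialize (IH ltac:(lia)). lra.
Qed.

Lemma partition_piece_nz i : (i < K)%nat -> forall t, tt i <= t <= tt (S i) -> g t <> 0%C.
Proof.
  intros Hi t Ht. apply g_nz.
  pose proof (partition_le O i ltac:(lia)). pose proof (partition_le (S i) K ltac:(lia)). lra.
Qed.

Lemma is_RInt_Cpowz_partition j i : (i <= K)%nat ->
  is_RInt (fun t => IZR j * Cpowz (g t) (j - 1) * velocity g t)%C 0 (tt i)
    (Cpowz (g (tt i)) j - Cpowz (g 0) j)%C.
Proof.
  induction i as [|i IH]; intros Hi.
  - rewrite tt0. replace (Cpowz (g 0) j - Cpowz (g 0) j)%C with (RtoC 0) by ring.
    exact (@is_RInt_point C_R_NormedModule _ 0).
  - replace (Cpowz (g (tt (S i))) j - Cpowz (g 0) j)%C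
      with (Cpowz (g (tt i)) j - Cpowz (g 0) j + (Cpowz (g (tt (S i))) j - Cpowz (g (tt i)) j))%C
      by ring.
    refine (is_RInt_Chasles _ _ (tt i) _ _ _ (IH ltac:(lia)) _).
    apply is_RInt_Cpowz_C1_piece; try apply pieces; try apply partition_piece_nz; lia.
Qed.

Lemma ex_RInt_Cpowz_partition k i : (i <= K)%nat ->
  ex_RInt (fun t => Cpowz (g t) k * velocity g t)%C 0 (tt i).
Proof.
  induction i as [|i IH]; intros Hi.
  - rewrite tt0. apply ex_RInt_point.
  - apply (ex_RInt_Chasles _ _ (tt i)); [apply IH; lia |].
    apply ex_RInt_Cpowz_C1_piece; try apply pieces; try apply partition_piece_nz; lia.
Qed.

End Partition.

Lemma contour_integral_Cpowz (g : R -> C) k :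
  pos_simple_closed_contour_around_0 g ->
  is_RInt (fun t => Cpowz (g t) k * velocity g t)%C 0 1
    (if (k =? -1)%Z then 2 * PI * Ci else RtoC 0)%C.
Proof.
  intros [[K [tt [_ [tt0 [ttK pieces]]]]] [Hclosed [_ [g_nz Hwinding]]]].
  destruct (Z.eqb_spec k (-1)) as [-> | Hk].
  - pose proof (ex_RInt_Cpowz_partition g K tt tt0 ttK pieces g_nz (-1) K (le_n K)) as HE.
    rewrite ttK in HE. rewrite <- Hwinding. unfold contour_integral.
    rewrite (@RInt_ext C_R_CompleteNormedModule _ (fun t => Cpowz (g t) (-1) * velocity g t)%C).
    + apply (@RInt_correct C_R_CompleteNormedModule). exact HE.
    + intros t _. rewrite Cpowz_m1. reflexivity.
  - (* [z^k] has the primitive [z^(k+1) / (k+1)], and the contour is closed. *)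
    pose proof (is_RInt_Cpowz_partition g K tt tt0 ttK pieces g_nz (k + 1) K (le_n K)) as HF.
    rewrite ttK, <- Hclosed, Z.add_simpl_r in HF.
    assert (Hk1 : IZR (k + 1) <> 0) by (apply not_0_IZR; lia).
    apply (is_RInt_scal _ _ _ (/ IZR (k + 1))) in HF.
    apply (is_RInt_C_ext _ _ _ _ _ _ HF); intros; rewrite scal_R_Cmult.
    + ring.
    + rewrite RtoC_inv by exact Hk1. field. intros E. apply Hk1. injection E. auto.
Qed.

Definition csum {A} (f : A -> C) (L : list A) : C :=
  fold_right (fun x acc => (f x + acc)%C) 0%C L.

Lemma csum_app {A} (f : A -> C) L1 L2 : csum f (L1 ++ L2) = (csum f L1 + csum f L2)%C.
Proof. induction L1 as [|x L1 IH]; simpl; [ring | rewrite IH; ring]. Qed.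

Lemma csum_map {A B} (f : B -> C) (h : A -> B) L : csum f (map h L) = csum (fun x => f (h x)) L.
Proof. induction L as [|x L IH]; simpl; [reflexivity | rewrite IH; reflexivity]. Qed.

Lemma csum_mult_l {A} (c : C) (f : A -> C) L : csum (fun x => c * f x)%C L = (c * csum f L)%C.
Proof. induction L as [|x L IH]; simpl; [ring | rewrite IH; ring]. Qed.

Lemma csum_minus {A} (f1 f2 : A -> C) L :
  csum (fun x => f1 x - f2 x)%C L = (csum f1 L - csum f2 L)%C.
Proof. induction L as [|x L IH]; simpl; [ring | rewrite IH; ring]. Qed.

Lemma csum_ext {A} (f1 f2 : A -> C) L : (forall x, f1 x = f2 x) -> csum f1 L = csum f2 L.
Proof. intros H. induction L as [|x L IH]; simpl; [reflexivity | rewrite IH, H; reflexivity]. Qed.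

Lemma is_RInt_csum_mult {A} (F : A -> R -> C) (w : R -> C) (I : A -> C) L a b :
  (forall x, is_RInt (fun t => F x t * w t)%C a b (I x)) ->
  is_RInt (fun t => csum (fun x => F x t) L * w t)%C a b (csum I L).
Proof.
  intros H. induction L as [|x L IH].
  - apply (is_RInt_C_ext (fun _ => RtoC 0) _ a b (scal (b - a) (RtoC 0))).
    + exact (is_RInt_const _ _ _).
    + rewrite scal_R_Cmult. apply Cmult_0_r.
    + intros t. simpl. ring.
  - apply (is_RInt_C_ext _ _ _ _ _ _ (is_RInt_plus _ _ _ _ _ _ (H x) IH)); [reflexivity |].
    intros t. simpl. rewrite Cmult_plus_distr_r. reflexivity.
Qed.

Definition geom_sum (a : Z) (N : nat) (z : C) : C :=
  csum (fun j => Cpowz z (a + Z.of_nat j)) (seq 0 N).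

Lemma geom_sum_telescope (z : C) a N : z <> 0%C ->
  ((1 - z) * geom_sum a N z = Cpowz z a - Cpowz z (a + Z.of_nat N))%C.
Proof.
  intros Hz. induction N as [|N IH].
  - rewrite Z.add_0_r. unfold geom_sum. simpl. ring.
  - unfold geom_sum in *.
    replace (a + Z.of_nat (S N))%Z with (a + Z.of_nat N + 1)%Z by lia.
    rewrite seq_S, csum_app. simpl.
    rewrite Cpowz_add1 by exact Hz.
    transitivity ((1 - z) * csum (fun j => Cpowz z (a + Z.of_nat j)) (seq 0 N)
                  + (1 - z) * Cpowz z (a + Z.of_nat N))%C; [ring |].
    rewrite IH. ring.
Qed.

Lemma contour_integral_geom_sum (g : R -> C) a N :
  pos_simple_closed_contour_around_0 g ->
  is_RInt (fun t => geom_sum a N (g t) * velocity g t)%C 0 1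
    (if andb (a <=? -1)%Z (-1 <? a + Z.of_nat N)%Z then 2 * PI * Ci else RtoC 0)%C.
Proof.
  intros Hg. unfold geom_sum.
  eapply is_RInt_C_ext;
    [apply (is_RInt_csum_mult (fun j t => Cpowz (g t) (a + Z.of_nat j))); intros j;
     apply contour_integral_Cpowz, Hg | | reflexivity].
  induction N as [|N IH].
  - simpl. destruct (Z.leb_spec a (-1)), (Z.ltb_spec (-1) (a + 0)); simpl; reflexivity || lia.
  - rewrite seq_S, csum_app, IH, Nat2Z.inj_succ. cbn [csum fold_right Nat.add].
    destruct (Z.leb_spec a (-1)), (Z.ltb_spec (-1) (a + Z.of_nat N)),
      (Z.ltb_spec (-1) (a + Z.succ (Z.of_nat N))), (Z.eqb_spec (a + Z.of_nat N) (-1));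
      simpl; try ring; lia.
Qed.

(* The Laurent polynomial [(z^d - z^(-d)) / (1 - z)]. *)
Definition antisym_quotient (d : Z) (z : C) : C :=
  (- IZR (Z.sgn d) * geom_sum (- Z.abs d) (2 * Z.abs_nat d) z)%C.

Lemma Z_of_nat_double_abs d : Z.of_nat (2 * Z.abs_nat d) = (2 * Z.abs d)%Z.
Proof. rewrite Nat2Z.inj_mul, Zabs2Nat.id_abs. reflexivity. Qed.

Lemma antisym_quotient_spec (z : C) d : z <> 0%C ->
  ((1 - z) * antisym_quotient d z = Cpowz z d - Cpowz z (- d))%C.
Proof.
  intros Hz. unfold antisym_quotient.
  transitivity (- IZR (Z.sgn d) * ((1 - z) * geom_sum (- Z.abs d) (2 * Z.abs_nat d) z))%C;
    [ring |].
  rewrite geom_sum_telescope, Z_of_nat_double_abs by exact Hz.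
  replace (- Z.abs d + 2 * Z.abs d)%Z with (Z.abs d) by lia.
  destruct d; simpl; ring.
Qed.

Lemma contour_integral_antisym_quotient (g : R -> C) d :
  pos_simple_closed_contour_around_0 g ->
  is_RInt (fun t => antisym_quotient d (g t) * velocity g t)%C 0 1
    (2 * PI * Ci * - IZR (Z.sgn d))%C.
Proof.
  intros Hg. unfold antisym_quotient.
  pose proof (contour_integral_geom_sum g (- Z.abs d) (2 * Z.abs_nat d) Hg) as HG.
  apply (is_RInt_scal _ _ _ (- IZR (Z.sgn d))) in HG.
  apply (is_RInt_C_ext _ _ _ _ _ _ HG).
  - rewrite scal_R_Cmult, RtoC_opp, Z_of_nat_double_abs.
    destruct (Z.leb_spec (- Z.abs d) (-1)), (Z.ltb_spec (-1) (- Z.abs d + 2 * Z.abs d));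
      simpl; try lia; destruct d; simpl; try lia; ring.
  - intros t. rewrite scal_R_Cmult, RtoC_opp. ring.
Qed.

Definition score_diff (l : list bool) : Z :=
  (Z.of_nat (alice_score l) - Z.of_nat (bob_score l))%Z.

Lemma score_diff_cons2 b b' l :
  score_diff (b :: b' :: l) =
    ((if b then if b' then 1 else -1 else 0) + score_diff (b' :: l))%Z.
Proof.
  unfold score_diff, alice_score, bob_score.
  change (count_pair ?p ?q (b :: b' :: l)) with
    ((if andb (Bool.eqb b p) (Bool.eqb b' q) then 1 else 0) + count_pair p q (b' :: l))%nat.
  destruct b, b'; cbn [Bool.eqb andb]; lia.
Qed.

Definition score_gf (z : C) (b : bool) (m : nat) : C :=
  csum (fun l => Cpowz z (score_diff (b :: l))) (all_seqs m).

Lemma score_gf_H_S (z : C) m : z <> 0%C ->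
  score_gf z true (S m) = (z * score_gf z true m + / z * score_gf z false m)%C.
Proof.
  intros Hz. unfold score_gf. simpl all_seqs. rewrite csum_app, !csum_map, <- !csum_mult_l.
  f_equal; apply csum_ext; intros l; rewrite score_diff_cons2.
  - rewrite Z.add_comm. apply Cpowz_add1. exact Hz.
  - replace (-1 + score_diff (false :: l))%Z with (score_diff (false :: l) - 1)%Z by lia.
    rewrite <- (Z.sub_add 1 (score_diff (false :: l))) at 2.
    rewrite Cpowz_add1 by exact Hz. field. exact Hz.
Qed.

Lemma score_gf_T_S (z : C) m :
  score_gf z false (S m) = (score_gf z true m + score_gf z false m)%C.
Proof.
  unfold score_gf. simpl all_seqs. rewrite csum_app, !csum_map.
  f_equal; apply csum_ext; intros l; rewrite score_diff_cons2; reflexivity.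
Qed.

Lemma M2mul_assoc A1 A2 A3 : M2mul A1 (M2mul A2 A3) = M2mul (M2mul A1 A2) A3.
Proof. destruct A1, A2, A3. unfold M2mul. simpl. f_equal; ring. Qed.

Lemma M2pow_S_r A m : M2pow A (S m) = M2mul (M2pow A m) A.
Proof.
  induction m as [|m IH].
  - destruct A. cbn [M2pow]. unfold M2mul, M2id. simpl. f_equal; ring.
  - change (M2pow A (S (S m))) with (M2mul A (M2pow A (S m))).
    rewrite IH at 1. apply M2mul_assoc.
Qed.

Lemma M2pow_Amat_column_sums (z : C) m : z <> 0%C ->
  (m11 (M2pow (Amat z) m) + m21 (M2pow (Amat z) m) = score_gf z false m)%C /\
  (m12 (M2pow (Amat z) m) + m22 (M2pow (Amat z) m) = score_gf z true m)%C.
Proof.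
  intros Hz. induction m as [|m [IH1 IH2]].
  - unfold score_gf, score_diff, Cpowz. simpl. split; ring.
  - rewrite M2pow_S_r, score_gf_H_S, score_gf_T_S by exact Hz.
    rewrite <- IH1, <- IH2. destruct (M2pow (Amat z) m). simpl. split; ring.
Qed.

Lemma ones_form_M2pow_Amat (z : C) m : z <> 0%C ->
  ones_form (M2pow (Amat z) m) = csum (fun l => Cpowz z (score_diff l)) (all_seqs (S m)).
Proof.
  intros Hz. destruct (M2pow_Amat_column_sums z m Hz) as [H1 H2].
  simpl all_seqs. rewrite csum_app, !csum_map.
  fold (score_gf z true m) (score_gf z false m). rewrite <- H1, <- H2.
  unfold ones_form. ring.
Qed.

Lemma integrand_antisym_quotient_sum m (z : C) : z <> 0%C -> z <> 1%C ->
  integrand (S m) z = csum (fun l => antisym_quotient (score_diff l) z) (all_seqs (S m)).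
Proof.
  intros Hz Hz1. unfold integrand. rewrite Nat.sub_1_r. simpl Nat.pred.
  assert (H1z : (1 - z)%C <> 0%C).
  { intros E. apply Hz1. replace z with (1 - (1 - z))%C by ring. rewrite E. ring. }
  assert (Hinvz : (/ z)%C <> 0%C).
  { intros E. apply C1_nz. rewrite <- (Cinv_l z Hz), E. ring. }
  rewrite (ones_form_M2pow_Amat z), (ones_form_M2pow_Amat (/ z)) by assumption.
  rewrite <- csum_minus.
  erewrite csum_ext by (intros l; rewrite Cpowz_inv, <- antisym_quotient_spec by exact Hz;
                        reflexivity).
  rewrite csum_mult_l. field. exact H1z.
Qed.

Lemma is_RInt_ext_except_point (f h : R -> C) a b v t1 :
  a <= b -> is_RInt f a b v -> (forall t, a < t < b -> t <> t1 -> f t = h t) ->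
  is_RInt h a b v.
Proof.
  intros Hab Hf Hfh.
  destruct (classic (a < t1 < b)) as [Ht1 | Ht1].
  - pose (V := C_R_CompleteNormedModule).
    assert (Hex : @ex_RInt V f a b) by (exists v; exact Hf).
    assert (Hex1 : @ex_RInt V f a t1) by (apply (ex_RInt_Chasles_1 _ _ _ b); [lra | exact Hex]).
    assert (Hex2 : @ex_RInt V f t1 b) by (apply (ex_RInt_Chasles_2 _ a); [lra | exact Hex]).
    rewrite <- (@is_RInt_unique V f a b v Hf), <- (@RInt_Chasles V f a t1 b Hex1 Hex2).
    apply (@is_RInt_Chasles V _ _ t1);
      (apply (is_RInt_ext f); [| apply (@RInt_correct V); assumption]);
      rewrite Rmin_left, Rmax_right by lra; intros t Ht; apply Hfh; lra.
  - apply (is_RInt_ext f); [| exact Hf].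
    rewrite Rmin_left, Rmax_right by lra. intros t Ht. apply Hfh; [exact Ht |].
    intros ->. contradiction.
Qed.

Lemma injective_on_hits_once (g : R -> C) (w : C) :
  (forall s t, 0 <= s -> s < t -> t < 1 -> g s <> g t) ->
  exists t1, forall t, 0 < t < 1 -> t <> t1 -> g t <> w.
Proof.
  intros Hinj. destruct (classic (exists t1, 0 < t1 < 1 /\ g t1 = w)) as [[t1 [Ht1 Hw]] | Hnone].
  - exists t1. intros t Ht Htt1 Hgt. subst w.
    destruct (Rlt_or_le t t1); [apply (Hinj t t1) | apply (Hinj t1 t)]; auto; lra.
  - exists 0. intros t Ht _ Hgt. apply Hnone. exists t. auto.
Qed.

Lemma csum_neg_sgn_score_diff L :
  csum (fun l => - IZR (Z.sgn (score_diff l)))%C L =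
    RtoC (INR (length (filter (fun l => Nat.ltb (alice_score l) (bob_score l)) L))
          - INR (length (filter (fun l => Nat.ltb (bob_score l) (alice_score l)) L))).
Proof.
  induction L as [|l L IH]; [simpl; f_equal; ring |].
  cbn [csum fold_right filter]. fold (csum (fun l => - IZR (Z.sgn (score_diff l)))%C L).
  rewrite IH. unfold score_diff.
  destruct (Nat.ltb_spec (alice_score l) (bob_score l)),
    (Nat.ltb_spec (bob_score l) (alice_score l));
    [lia | rewrite Z.sgn_neg | rewrite Z.sgn_pos
    | replace (Z.of_nat (alice_score l) - Z.of_nat (bob_score l))%Z with 0%Z];
    try lia; rewrite <- RtoC_opp, <- RtoC_plus; f_equal; cbn [length Z.sgn]; rewrite ?S_INR; lra.
Qed.

Theorem mainTheorem2 :
  forall (n : nat), (1 <= n)%nat ->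
  forall (g : R -> C), pos_simple_closed_contour_around_0 g ->
    RtoC (Delta_n n) =
      (RtoC (Rinv (pow 2 n)) * / (2 * PI * Ci) * contour_integral g (integrand n))%C.
Proof.
  intros n Hn g Hg. destruct n as [|m]; [lia |].
  pose proof Hg as (_ & _ & Hinj & g_nz & _).
  destruct (injective_on_hits_once g 1%C Hinj) as [t1 Ht1].
  assert (Hint : is_RInt (fun t => integrand (S m) (g t) * velocity g t)%C 0 1
                   (csum (fun l => 2 * PI * Ci * - IZR (Z.sgn (score_diff l))) (all_seqs (S m)))%C).
  { apply (is_RInt_ext_except_point
             (fun t => csum (fun l => antisym_quotient (score_diff l) (g t)) (all_seqs (S m))
                       * velocity g t)%C _ 0 1 _ t1); [lra | |].
    - apply is_RInt_csum_mult. intros l. apply contour_integral_antisym_quotient, Hg.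
    - intros t Ht Htt1. rewrite integrand_antisym_quotient_sum; auto.
      apply g_nz. lra. }
  unfold contour_integral. rewrite (@is_RInt_unique C_R_CompleteNormedModule _ _ _ _ Hint).
  rewrite csum_mult_l, csum_neg_sgn_score_diff.
  unfold Delta_n, P_Bob, P_Alice, prob_event.
  assert (H2n : 2 ^ S m <> 0) by (apply pow_nonzero; lra).
  pose proof PI_RGT_0.
  rewrite !RtoC_minus, !RtoC_div, RtoC_inv by exact H2n.
  field. split; [exact Ci_nz |].
  split; intros E; injection E; intros E'; [lra | exact (H2n E')].
Qed.
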